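(* Let $p=1^i0^j1^k$ with integers $i,k\ge0$ and $j\ge1$. For every $n\ge i+j+k$, $$M_{n,p}=\max\left\{\binom{a}{i}\binom{b}{j}\binom{c}{k}\ :\ a,b,c\ge 0,\ a+b+c=n\right\}.$$
   Context: $c_p(w)$ is the number of occurrences of $p$ as a (not necessarily consecutive) subsequence of the binary word $w$. $M_{n,p}=\max\{c_p(w): w\in\{0,1\}^n\}$. $x^m$ denotes the letter $x$ repeated $m$ times. *)

From mathcomp Require Import all_boot.
Set Implicit Arguments.
Unset Strict Implicit.
Unset Printing Implicit Defensive.

(* c_p(w): number of occurrences of p as a (not necessarily consecutive)
   subsequence of w, i.e. number of position sets (encoded as selection
   masks of length |w|) selecting exactly p. *)
Definition occ (p : seq bool) (n : nat) (w : n.-tuple bool) : nat :=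
  #|[set m : n.-tuple bool | mask m w == p]|.

Definition Mnp (n : nat) (p : seq bool) : nat :=
  \max_(w : n.-tuple bool) occ p w.

Definition pat (i j k : nat) : seq bool :=
  nseq i true ++ nseq j false ++ nseq k true.

(* The number of occurrences of p = 1^i 0^j 1^k (j >= 1) in a binary word
   of length n is maximised by a word of the shape 1^a 0^b 1^c.

   Two general facts about it
   drive the proof: counts are supermultiplicative under concatenation
   ([occ_count_cat]), and a pattern occurs in w at most
   C(#1 w, #1 p) * C(#0 w, #0 p) times ([occ_count_le_binom]).

   Lower bound: 1^a 0^b 1^c contains at least C(a,i) C(b,j) C(c,k)
   occurrences of p, by supermultiplicativity.
   Upper bound: splitting an occurrence of 1^i 0 q at the position of its
   first 0 expresses the count as a sum over the zeros of w, weighted by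
   C(#ones before that zero, i) ([zero_split], [occ_count_head_zero]).
   Bounding each summand by the binomial estimate and the weights by their
   largest value, and summing the C(#zeros after, j-1) by Pascal's rule,
   yields C(a,i) C(b,j) C(c,k) for suitable a + b + c = n ([zero_split_le]). *)

From mathcomp Require Import all_boot zify.
Set Implicit Arguments.
Unset Strict Implicit.

Fixpoint occ_count (p w : seq bool) : nat :=
  match w with
  | [::] => p == [::]
  | x :: w' => occ_count p w' + (if p is y :: p' then (x == y) * occ_count p' w' else 0)
  end.

Lemma sum_tupleS n (F : seq bool -> nat) :
  \sum_(t : n.+1.-tuple bool) F t =
  \sum_(t : n.-tuple bool) F (true :: t) + \sum_(t : n.-tuple bool) F (false :: t).
Proof.
rewrite (reindex (fun p : bool * n.-tuple bool => [tuple of p.1 :: p.2])) /=.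
  rewrite -(pair_big xpredT xpredT (fun b (t : n.-tuple bool) => F (b :: t))) /=.
  by rewrite big_bool.
exists (fun t : n.+1.-tuple bool => (thead t, [tuple of behead t])).
  by move=> [b t] _ /=; congr pair; apply: val_inj.
by move=> t _; rewrite [in RHS](tuple_eta t); apply: val_inj.
Qed.

Lemma sum_mask (w p : seq bool) :
  \sum_(m : (size w).-tuple bool) (mask m w == p) = occ_count p w.
Proof.
elim: w p => [|x w IH] p /=.
  rewrite (big_pred1 [tuple]) /=; first by case: p.
  by move=> t; rewrite [t]tuple0 /= eqxx.
rewrite (sum_tupleS _ (fun m => nat_of_bool (mask m (x :: w) == p))) /=.
rewrite IH addnC; congr addn.
case: p => [|y p']; first by rewrite big1.
under eq_bigr do rewrite eqseq_cons.
rewrite -IH big_distrr /=; apply: eq_bigr => m _.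
by case: (x == y); case: (mask m w == p').
Qed.

Lemma occE n (w : n.-tuple bool) p : occ p w = occ_count p w.
Proof.
case: w => s size_s; have size_n : size s = n by apply/eqP.
subst n.
rewrite /occ -sum1dep_card big_mkcond /= -sum_mask.
by apply: eq_bigr => m _; case: (_ == _).
Qed.

Lemma occ_count_nil w : occ_count [::] w = 1.
Proof. by elim: w => //= x w ->. Qed.

Lemma occ_count_nseq (x : bool) c k : occ_count (nseq k x) (nseq c x) = 'C(c, k).
Proof.
elim: c k => [|c IH] [|k] //=; first by rewrite occ_count_nil.
by rewrite eqxx mul1n binS -IH -IH.
Qed.

(* Occurrences of p1 in w1 and of p2 in w2 combine into distinct
   occurrences of p1 ++ p2 in w1 ++ w2. *)
Lemma occ_count_cat p1 p2 w1 w2 :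
  occ_count p1 w1 * occ_count p2 w2 <= occ_count (p1 ++ p2) (w1 ++ w2).
Proof.
elim: w1 p1 => [|x w1 IH] [|y p1] //=.
- by rewrite mul1n.
- rewrite occ_count_nil mul1n; apply: leq_trans (leq_addr _ _).
  by have := IH [::]; rewrite occ_count_nil mul1n.
- by rewrite mulnDl -mulnA leq_add ?leq_mul.
Qed.

(* An occurrence of p in w is determined by the positions of its ones among
   the ones of w and of its zeros among the zeros of w. *)
Lemma occ_count_le_binom p w :
  occ_count p w <= 'C(count id w, count id p) * 'C(count negb w, count negb p).
Proof.
elim: w p => [|x w IH] [|y p] //=.
  by rewrite occ_count_nil !bin0.
case: x; case: y; rewrite /= ?add0n ?add1n ?mul1n ?mul0n ?addn0.
- by rewrite binS mulnDl leq_add // (IH (true :: p)).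
- apply: leq_trans (IH (false :: p)) _.
  by rewrite leq_mul // leq_bin2l.
- apply: leq_trans (IH (true :: p)) _.
  by rewrite leq_mul // leq_bin2l.
- by rewrite binS mulnDr leq_add // (IH (false :: p)).
Qed.

(* zero_split g q w sums, over the zeros of w, the weight g (number of ones
   of w before that zero) times the number of occurrences of q after it. *)
Fixpoint zero_split (g : nat -> nat) (q w : seq bool) : nat :=
  match w with
  | [::] => 0
  | x :: w' => if x then zero_split (fun l => g l.+1) q w'
               else zero_split g q w' + g 0 * occ_count q w'
  end.

Lemma zero_split_ext g1 g2 q w :
  (forall l, g1 l = g2 l) -> zero_split g1 q w = zero_split g2 q w.
Proof.
elim: w g1 g2 => [|x w IH] g1 g2 eq_g //=.
by case: x; [apply: IH | rewrite (IH g1 g2) // eq_g].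
Qed.

Lemma zero_split_add g g1 g2 q w : (forall l, g l = g1 l + g2 l) ->
  zero_split g q w = zero_split g1 q w + zero_split g2 q w.
Proof.
elim: w g g1 g2 => [|x w IH] g g1 g2 eq_g //=.
case: x; first exact: IH.
rewrite (IH g g1 g2) // eq_g mulnDl; lia.
Qed.

(* Splitting an occurrence of 1^i 0 q at its first zero: the ones before it
   can be chosen in C(l, i) ways among the l ones of w preceding that zero. *)
Lemma occ_count_head_zero i q w :
  occ_count (nseq i true ++ false :: q) w = zero_split (binomial^~ i) q w.
Proof.
elim: w i => [|x w IH] i /=; first by case: i.
case: x i => [[|i]|[|i]] /=.
- rewrite mul0n addn0 (IH 0); apply: zero_split_ext => l; by rewrite !bin0.
- move: (IH i.+1) (IH i) => /= -> ->; rewrite mul1n.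
  by symmetry; apply: zero_split_add => l; apply: binS.
- by move: (IH 0) => /= ->; rewrite mul1n.
- by move: (IH i.+1) => /= ->; rewrite mul0n.
Qed.

Lemma zero_split_le g j k w : exists2 l, l <= count id w &
  zero_split g (nseq j false ++ nseq k true) w
  <= 'C(count negb w, j.+1) * (g l * 'C(count id w - l, k)).
Proof.
elim: w g => [|x w IH] g /=; first by exists 0.
case: x => /=.
  have [l le_l split_le] := IH (fun l => g l.+1).
  by exists l.+1; rewrite ?add1n ?subSS.
set q := nseq j false ++ nseq k true.
have [l le_l split_le] := IH g.
have head_le : g 0 * occ_count q w
    <= 'C(count negb w, j) * (g 0 * 'C(count id w - 0, k)).
  rewrite subn0 mulnCA leq_mul2l; apply/orP; right.
  apply: leq_trans (occ_count_le_binom _ _) _.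
  by rewrite !count_cat !count_nseq /= !mul0n !mul1n add0n addn0 mulnC.
have [m le_m max_le] : exists2 m, m <= count id w &
    maxn (g l * 'C(count id w - l, k)) (g 0 * 'C(count id w - 0, k))
    <= g m * 'C(count id w - m, k).
  by rewrite /maxn; case: ltnP => _; [exists 0 | exists l].
exists m => //; rewrite add0n add1n binS mulnDl leq_add //.
  by apply: leq_trans split_le _; rewrite leq_mul // (leq_trans (leq_maxl _ _) max_le).
by apply: leq_trans head_le _; rewrite leq_mul // (leq_trans (leq_maxr _ _) max_le).
Qed.

Lemma occ_count_pat_le i j k w : exists a b, a + b <= size w /\
  occ_count (pat i j.+1 k) w <= 'C(a, i) * 'C(b, j.+1) * 'C(size w - a - b, k).
Proof.
have [a le_a split_le] := zero_split_le (binomial^~ i) j k w.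
have size_w : count id w + count negb w = size w := count_predC id w.
exists a, (count negb w); split; first lia.
rewrite (_ : size w - a - count negb w = count id w - a); last lia.
rewrite [pat _ _ _]/= occ_count_head_zero.
by rewrite -mulnA mulnCA.
Qed.

Lemma occ_count_pat_blocks i j k a b c :
  'C(a, i) * 'C(b, j) * 'C(c, k)
  <= occ_count (pat i j k) (nseq a true ++ nseq b false ++ nseq c true).
Proof.
rewrite -(occ_count_nseq true a i) -(occ_count_nseq false b j).
rewrite -(occ_count_nseq true c k) -mulnA.
by apply: leq_trans (occ_count_cat _ _ _ _); rewrite leq_mul // occ_count_cat.
Qed.

Theorem mainTheorem7 (i j k n : nat) :
  1 <= j -> i + j + k <= n ->
  Mnp n (pat i j k) =
  \max_(a < n.+1) \max_(b < n.+1 | a + b <= n)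
     ('C(a, i) * 'C(b, j) * 'C(n - a - b, k)).
Proof.
case: j => // j _ _; apply/eqP; rewrite eqn_leq; apply/andP; split.
- apply/bigmax_leqP => w _; rewrite occE.
  have [a [b [le_ab occ_le]]] := occ_count_pat_le i j k w.
  rewrite size_tuple in le_ab occ_le.
  have lt_a : a < n.+1 by lia.
  have lt_b : b < n.+1 by lia.
  apply: leq_trans occ_le (leq_trans _ (leq_bigmax (Ordinal lt_a))).
  exact: (leq_bigmax_cond (Ordinal lt_b) le_ab).
- apply/bigmax_leqP => a _; apply/bigmax_leqP => b le_ab.
  have size_w : size (nseq a true ++ nseq b false ++ nseq (n - a - b) true) == n.
    by rewrite !size_cat !size_nseq; apply/eqP; lia.
  apply: leq_trans (leq_bigmax (Tuple size_w)).
  by rewrite occE occ_count_pat_blocks.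
Qed.
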